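(* Let $X$ be a strongly shortcut $R$-rough geodesic metric space (for some $R\ge0$). Then there exists $L_X>1$ such that whenever $Y$ is an $R'$-rough geodesic metric space (for some $R'\ge 0$), $C>0$, and $f\colon Y\to X$ is an $(L_X,C)$-quasi-isometry up to scaling, then $Y$ is strongly shortcut. In particular, if $Y$ is a rough geodesic metric space and $f\colon Y\to X$ is a rough similarity, then $Y$ is strongly shortcut.
   Context: $X$ is $R$-rough geodesic if any $x_1,x_2$ are joined by $f\colon[0,\ell]\to X$, $\ell=d(x_1,x_2)$, $f(0)=x_1,f(\ell)=x_2$, with $|d(f(s),f(t))-|s-t||\le R$; a rough geodesic space is one that is $R$-rough geodesic for some $R\ge0$. An $R$-circle is a map $\alpha\colon S\to X$ from a Riemannian circle $S$ of length $|S|$ with $d(\alpha(p),\alpha(q))\le d_S(p,q)+R$; for $K>1$ it is $\frac1K$-almost isometric if $d(\alpha(p),\alpha(\bar p))\ge\frac1K\cdot\frac{|S|}2$ for all antipodal $p,\bar p$. An $R$-rough geodesic space is strongly shortcut if for some $K>1$ there is a bound on the lengths of its $\frac1K$-almost isometric $R$-circles. For a metric space $Y$ and $\lambda>0$, $\lambda Y$ denotes $Y$ with metric multiplied by $\lambda$. A map $f\colon Y\to X$ is a $(K,C)$-quasi-isometry up to scaling if for some $\lambda>0$ it is a $(K,C)$-quasi-isometry $\lambda Y\to X$ (i.e. $\frac1K d-C\le d(f(\cdot),f(\cdot))\le Kd+C$ and every point of $X$ is within $C$ of the image). It is a rough similarity if it is a $(1,C)$-quasi-isometry up to scaling for some $C>0$.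 *)

From Stdlib Require Import Reals.
Open Scope R_scope.

Definition is_metric {X : Type} (d : X -> X -> R) : Prop :=
  (forall x y, 0 <= d x y) /\
  (forall x y, d x y = 0 <-> x = y) /\
  (forall x y, d x y = d y x) /\
  (forall x y z, d x z <= d x y + d y z).

Definition rough_geodesic {X : Type} (d : X -> X -> R) (Rr : R) : Prop :=
  forall x1 x2 : X, exists f : R -> X,
    f 0 = x1 /\ f (d x1 x2) = x2 /\
    forall s t, 0 <= s <= d x1 x2 -> 0 <= t <= d x1 x2 ->
      Rabs (d (f s) (f t) - Rabs (s - t)) <= Rr.

(* Riemannian circle S of length L > 0 is modelled as [0, L) with the
   intrinsic distance min(|s-t|, L-|s-t|); a map S -> X is a function
   R -> X of which only the values on [0, L) matter. *)
Definition circ_dist (L s t : R) : R := Rmin (Rabs (s - t)) (L - Rabs (s - t)).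

Definition in_circle (L s : R) : Prop := 0 <= s < L.

Definition is_R_circle {X : Type} (d : X -> X -> R) (Rr L : R) (alpha : R -> X) : Prop :=
  0 < L /\
  forall s t, in_circle L s -> in_circle L t ->
    d (alpha s) (alpha t) <= circ_dist L s t + Rr.

Definition almost_isometric {X : Type} (d : X -> X -> R) (K L : R) (alpha : R -> X) : Prop :=
  forall s, 0 <= s < L / 2 ->
    d (alpha s) (alpha (s + L / 2)) >= (1 / K) * (L / 2).

Definition strongly_shortcut {X : Type} (d : X -> X -> R) (Rr : R) : Prop :=
  rough_geodesic d Rr /\
  exists K : R, 1 < K /\ exists B : R,
    forall (L : R) (alpha : R -> X),
      is_R_circle d Rr L alpha -> almost_isometric d K L alpha -> L <= B.

Definition quasi_isometry {Y X : Type} (dY : Y -> Y -> R) (dX : X -> X -> R)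
  (f : Y -> X) (K C : R) : Prop :=
  (forall y1 y2, (1 / K) * dY y1 y2 - C <= dX (f y1) (f y2) /\
                 dX (f y1) (f y2) <= K * dY y1 y2 + C) /\
  (forall x, exists y, dX x (f y) <= C).

Definition qi_up_to_scaling {Y X : Type} (dY : Y -> Y -> R) (dX : X -> X -> R)
  (f : Y -> X) (K C : R) : Prop :=
  exists lambda : R, 0 < lambda /\
    quasi_isometry (fun y1 y2 => lambda * dY y1 y2) dX f K C.

Definition rough_similarity {Y X : Type} (dY : Y -> Y -> R) (dX : X -> X -> R)
  (f : Y -> X) : Prop :=
  exists C : R, 0 < C /\ qi_up_to_scaling dY dX f 1 C.

From Stdlib Require Import Reals Lra Lia ZArith IndefiniteDescription.
Open Scope R_scope.

(* Sample a (1/LX)-almost isometric Ry-circle of Y at 2n equally spaced points and map them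
   to X by f.  Consecutive images are at most m apart, antipodal ones are far apart, and
   joining consecutive images by rough geodesics reparametrized to length m yields an
   Rx-circle in X of length 2nm.  If LX^3 < KX and n is large, the image of a long circle is
   (1/KX)-almost isometric, so the strong shortcut bound of X bounds its length, which grows
   linearly with the length of the circle in Y.  A rough similarity is an (LX, C)-quasi-isometry
   up to scaling for every LX >= 1. *)

Lemma is_metric_self {X : Type} {d : X -> X -> R} : is_metric d -> forall x, d x x = 0.
Proof. intros (_ & Hzero & _) x. now apply Hzero. Qed.

Lemma is_metric_sym {X : Type} {d : X -> X -> R} : is_metric d -> forall x y, d x y = d y x.
Proof. intros Hd. apply Hd. Qed.

Lemma is_metric_triangle {X : Type} {d : X -> X -> R} :
  is_metric d -> forall x y z, d x z <= d x y + d y z.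
Proof. intros Hd. apply Hd. Qed.

Definition block (m u : R) : nat := Z.to_nat (Int_part (u / m)).

Lemma block_spec m u : 0 < m -> 0 <= u ->
  INR (block m u) * m <= u < (INR (block m u) + 1) * m.
Proof.
  intros Hm Hu. unfold block.
  destruct (base_Int_part (u / m)) as [Hle Hgt].
  assert (Hz : (0 <= Int_part (u / m))%Z).
  { assert (0 <= u / m) by (apply Rle_mult_inv_pos; lra).
    assert (Hneg : IZR (-1) < IZR (Int_part (u / m))) by (simpl; lra).
    apply lt_IZR in Hneg. lia. }
  rewrite INR_IZR_INZ, Z2Nat.id by exact Hz.
  set (z := IZR (Int_part (u / m))) in *.
  replace u with (u / m * m) by (field; lra).
  split; [apply Rmult_le_compat_r | apply Rmult_lt_compat_r]; lra.
Qed.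

Lemma block_unique m u k : 0 < m -> INR k * m <= u < (INR k + 1) * m -> block m u = k.
Proof.
  intros Hm Hu. unfold block.
  rewrite <- (Int_part_spec (u / m) (Z.of_nat k)), Nat2Z.id; [reflexivity|].
  rewrite <- INR_IZR_INZ.
  assert (INR k <= u / m < INR k + 1).
  { split; [apply Rmult_le_reg_r with m | apply Rmult_lt_reg_r with m];
      try replace (u / m * m) with u by (field; lra); lra. }
  lra.
Qed.

Lemma block_lt m u N : 0 < m -> 0 <= u < INR N * m -> (block m u < N)%nat.
Proof.
  intros Hm Hu. destruct (block_spec m u Hm (proj1 Hu)).
  apply INR_lt, Rmult_lt_reg_r with m; lra.
Qed.

Lemma block_offset_range m u : 0 < m -> 0 <= u -> 0 <= u - INR (block m u) * m < m.
Proof. intros Hm Hu. pose proof (block_spec m u Hm Hu). lra. Qed.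

Definition rough_path {X : Type} (d : X -> X -> R) (Rr m : R) (x1 x2 : X) (p : R -> X) :
  Prop :=
  (forall a, 0 <= a <= m -> d (p a) x1 <= a) /\
  (forall a, 0 <= a <= m -> d (p a) x2 <= m - a) /\
  (forall a b, d (p a) (p b) <= Rabs (a - b) + Rr).

Definition clamp (lo hi a : R) : R := Rmax lo (Rmin a hi).

Lemma clamp_range lo hi a : lo <= hi -> lo <= clamp lo hi a <= hi.
Proof. intros. unfold clamp, Rmax, Rmin. repeat destruct Rle_dec; lra. Qed.

Lemma clamp_lipschitz lo hi a b : lo <= hi -> Rabs (clamp lo hi a - clamp lo hi b) <= Rabs (a - b).
Proof.
  intros. unfold clamp, Rmax, Rmin, Rabs.
  repeat destruct Rle_dec; repeat destruct Rcase_abs; lra.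
Qed.

(* Starting the rough geodesic [Rr] late and stopping it [Rr] early absorbs its additive
   error at the endpoints; this is why the path needs length [d x1 x2 + 2 Rr]. *)
Lemma rough_path_of_rough_geodesic {X : Type} (d : X -> X -> R) (Rr m : R) (x1 x2 : X) :
  is_metric d -> rough_geodesic d Rr -> d x1 x2 + 2 * Rr <= m ->
  exists p, rough_path d Rr m x1 x2 p.
Proof.
  intros Hd Hg Hm. destruct (Hg x1 x2) as (g & Hg0 & Hgl & Hgd).
  set (l := d x1 x2) in *.
  assert (Hl : 0 <= l) by apply Hd.
  assert (Hgle : forall s t, 0 <= s <= l -> 0 <= t <= l -> d (g s) (g t) <= Rabs (s - t) + Rr).
  { intros s t Hs Ht. specialize (Hgd s t Hs Ht).
    pose proof (Rle_abs (d (g s) (g t) - Rabs (s - t))). lra. }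
  exists (fun a => g (clamp 0 l (a - Rr))).
  split; [|split].
  - intros a Ha. pose proof (clamp_range 0 l (a - Rr) Hl) as Hc.
    set (c := clamp 0 l (a - Rr)) in *.
    destruct (Req_dec c 0) as [-> | Hc0].
    + rewrite Hg0, (is_metric_self Hd). lra.
    + assert (c <= a - Rr) by (unfold c, clamp, Rmax, Rmin in *; repeat destruct Rle_dec; lra).
      specialize (Hgle c 0 Hc ltac:(lra)). rewrite Hg0, Rminus_0_r, Rabs_right in Hgle by lra.
      lra.
  - intros a Ha. pose proof (clamp_range 0 l (a - Rr) Hl) as Hc.
    set (c := clamp 0 l (a - Rr)) in *.
    destruct (Req_dec c l) as [-> | Hcl].
    + rewrite Hgl, (is_metric_self Hd). lra.
    + assert (a - Rr <= c) by (unfold c, clamp, Rmax, Rmin in *; repeat destruct Rle_dec; lra).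
      specialize (Hgle c l Hc ltac:(lra)). rewrite Hgl, Rabs_left1 in Hgle by lra.
      lra.
  - intros a b.
    pose proof (clamp_lipschitz 0 l (a - Rr) (b - Rr) Hl).
    specialize (Hgle _ _ (clamp_range 0 l (a - Rr) Hl) (clamp_range 0 l (b - Rr) Hl)).
    replace (a - Rr - (b - Rr)) with (a - b) in * by ring. lra.
Qed.

Section PolygonLoop.
Context {X : Type}.
Variables (d : X -> X -> R) (Rr m : R) (N : nat) (x : nat -> X)
  (seg : nat -> R -> X).
Hypotheses (Hd : is_metric d) (HRr : 0 <= Rr) (Hm : 0 < m)
  (Hseg : forall k, (k < N)%nat -> rough_path d Rr m (x k) (x (S k)) (seg k)).

Definition polygon_loop (u : R) : X := seg (block m u) (u - INR (block m u) * m).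

Lemma polygon_step k : (k < N)%nat -> d (x k) (x (S k)) <= m.
Proof.
  intros Hk. destruct (Hseg k Hk) as (H1 & H2 & _).
  specialize (H1 m ltac:(lra)). specialize (H2 m ltac:(lra)).
  pose proof (is_metric_triangle Hd (x k) (seg k m) (x (S k))).
  rewrite (is_metric_sym Hd (x k) (seg k m)) in *. lra.
Qed.

Lemma polygon_chain p q : (p <= q <= N)%nat -> d (x p) (x q) <= (INR q - INR p) * m.
Proof.
  induction q as [|q IH]; intros Hpq.
  - replace p with 0%nat by lia. rewrite (is_metric_self Hd). lra.
  - destruct (Nat.eq_dec p (S q)) as [-> | Hne].
    + rewrite (is_metric_self Hd). lra.
    + pose proof (IH ltac:(lia)). pose proof (polygon_step q ltac:(lia)).
      pose proof (is_metric_triangle Hd (x p) (x q) (x (S q))).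
      rewrite S_INR. lra.
Qed.

Lemma polygon_loop_dist_before u p : 0 <= u < INR N * m -> (p <= block m u)%nat ->
  d (polygon_loop u) (x p) <= u - INR p * m.
Proof.
  intros Hu Hp. unfold polygon_loop.
  pose proof (block_lt m u N Hm Hu) as Hi. pose proof (block_offset_range m u Hm (proj1 Hu)).
  set (i := block m u) in *.
  destruct (Hseg i Hi) as (Hstart & _).
  pose proof (Hstart (u - INR i * m) ltac:(lra)).
  pose proof (polygon_chain p i ltac:(lia)).
  pose proof (is_metric_triangle Hd (seg i (u - INR i * m)) (x i) (x p)).
  rewrite (is_metric_sym Hd (x i) (x p)) in *. lra.
Qed.

Lemma polygon_loop_dist_after u q : 0 <= u < INR N * m -> (block m u < q <= N)%nat ->
  d (polygon_loop u) (x q) <= INR q * m - u.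
Proof.
  intros Hu Hq. unfold polygon_loop.
  pose proof (block_lt m u N Hm Hu) as Hi. pose proof (block_offset_range m u Hm (proj1 Hu)).
  set (i := block m u) in *.
  destruct (Hseg i Hi) as (_ & Hend & _).
  pose proof (Hend (u - INR i * m) ltac:(lra)).
  pose proof (polygon_chain (S i) q ltac:(lia)).
  pose proof (is_metric_triangle Hd (seg i (u - INR i * m)) (x (S i)) (x q)).
  rewrite S_INR in *. lra.
Qed.

Lemma polygon_loop_dist_forward u v : 0 <= u -> u <= v -> v < INR N * m ->
  d (polygon_loop u) (polygon_loop v) <= v - u + Rr.
Proof.
  intros Hu Huv Hv.
  pose proof (block_spec m u Hm Hu). pose proof (block_spec m v Hm ltac:(lra)).
  destruct (Nat.eq_dec (block m u) (block m v)) as [Heq | Hne].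
  - unfold polygon_loop. rewrite <- Heq.
    destruct (Hseg (block m u) (block_lt m u N Hm ltac:(lra))) as (_ & _ & Hlip).
    rewrite <- Heq in *.
    specialize (Hlip (u - INR (block m u) * m) (v - INR (block m u) * m)).
    replace (u - INR (block m u) * m - (v - INR (block m u) * m)) with (u - v) in Hlip by ring.
    rewrite Rabs_left1 in Hlip by lra. lra.
  - assert (Hlt : (block m u < block m v)%nat).
    { destruct (Nat.lt_total (block m v) (block m u)) as [Hgt | [Heq | Hlt]]; try lia.
      apply le_INR in Hgt. rewrite S_INR in Hgt. nra. }
    pose proof (polygon_loop_dist_after u (S (block m u)) ltac:(lra)
      ltac:(pose proof (block_lt m v N Hm ltac:(lra)); lia)).
    pose proof (polygon_loop_dist_before v (S (block m u)) ltac:(lra) ltac:(lia)).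
    pose proof (is_metric_triangle Hd (polygon_loop u) (x (S (block m u))) (polygon_loop v)).
    rewrite (is_metric_sym Hd (x _) (polygon_loop v)) in *. lra.
Qed.

Lemma polygon_loop_dist_backward u v : x N = x 0%nat -> 0 <= u -> u <= v -> v < INR N * m ->
  d (polygon_loop u) (polygon_loop v) <= INR N * m - (v - u).
Proof.
  intros Hclosed Hu Huv Hv.
  pose proof (polygon_loop_dist_before u 0 ltac:(lra) ltac:(lia)).
  pose proof (polygon_loop_dist_after v N ltac:(lra)
    ltac:(pose proof (block_lt m v N Hm ltac:(lra)); lia)).
  pose proof (is_metric_triangle Hd (polygon_loop u) (x 0%nat) (polygon_loop v)).
  rewrite <- Hclosed, (is_metric_sym Hd (x N)) in *. simpl INR in *. lra.
Qed.

Lemma polygon_loop_R_circle : (0 < N)%nat -> x N = x 0%nat ->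
  is_R_circle d Rr (INR N * m) polygon_loop.
Proof.
  intros HN Hclosed. split.
  - apply Rmult_lt_0_compat; [apply lt_0_INR|]; assumption.
  - assert (Hordered : forall u v, in_circle (INR N * m) u -> in_circle (INR N * m) v ->
      u <= v -> d (polygon_loop u) (polygon_loop v) <= circ_dist (INR N * m) u v + Rr).
    { intros u v Hu Hv Huv. unfold in_circle, circ_dist in *.
      rewrite Rabs_left1 by lra.
      pose proof (polygon_loop_dist_forward u v ltac:(lra) Huv ltac:(lra)).
      pose proof (polygon_loop_dist_backward u v Hclosed ltac:(lra) Huv ltac:(lra)).
      unfold Rmin. destruct Rle_dec; lra. }
    intros u v Hu Hv. destruct (Rle_dec u v) as [Huv | Hvu].
    + now apply Hordered.
    + rewrite (is_metric_sym Hd). unfold circ_dist. rewrite Rabs_minus_sym.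
      apply Hordered; auto. lra.
Qed.

Lemma polygon_loop_antipodal n D : N = (2 * n)%nat ->
  (forall k, (k <= n)%nat -> D <= d (x k) (x (k + n)%nat)) ->
  forall u, 0 <= u < INR n * m -> D - m <= d (polygon_loop u) (polygon_loop (u + INR n * m)).
Proof.
  intros HN Hfar u Hu. unfold polygon_loop.
  pose proof (block_spec m u Hm (proj1 Hu)). pose proof (block_lt m u n Hm Hu) as Hi.
  set (i := block m u) in *.
  rewrite (block_unique m (u + INR n * m) (i + n)) by (try rewrite plus_INR; lra).
  rewrite plus_INR.
  replace (u + INR n * m - (INR i + INR n) * m) with (u - INR i * m) by ring.
  set (a := u - INR i * m).
  assert (Ha : 0 <= a <= m) by (unfold a; lra).
  destruct (Hseg i ltac:(lia)) as (Hp_start & Hp_end & _).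
  destruct (Hseg (i + n)%nat ltac:(lia)) as (Hq_start & Hq_end & _).
  pose proof (Hp_start a Ha). pose proof (Hp_end a Ha).
  pose proof (Hq_start a Ha). pose proof (Hq_end a Ha).
  set (p := seg i a) in *. set (q := seg (i + n)%nat a) in *.
  destruct (Rle_dec a (m / 2)).
  - pose proof (Hfar i ltac:(lia)).
    pose proof (is_metric_triangle Hd (x i) p (x (i + n)%nat)).
    pose proof (is_metric_triangle Hd p q (x (i + n)%nat)).
    rewrite (is_metric_sym Hd (x i) p) in *. lra.
  - pose proof (Hfar (S i) ltac:(lia)).
    pose proof (is_metric_triangle Hd (x (S i)) p (x (S i + n)%nat)).
    pose proof (is_metric_triangle Hd p q (x (S i + n)%nat)).
    rewrite (is_metric_sym Hd (x (S i)) p) in *. simpl Nat.add in *. lra.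
Qed.

End PolygonLoop.

Lemma R_circle_samples {Y : Type} (dY : Y -> Y -> R) (Ry K L : R) (alpha : R -> Y) (n : nat) :
  is_metric dY -> is_R_circle dY Ry L alpha -> almost_isometric dY K L alpha -> (0 < n)%nat ->
  exists y : nat -> Y, y (2 * n)%nat = y 0%nat /\
    (forall k, (k < 2 * n)%nat -> dY (y k) (y (S k)) <= L / INR (2 * n) + Ry) /\
    (forall k, (k <= n)%nat -> 1 / K * (L / 2) <= dY (y k) (y (k + n)%nat)).
Proof.
  intros Hd [HL Hcirc] Hanti Hn.
  set (σ := L / INR (2 * n)).
  assert (H2n : INR (2 * n) = 2 * INR n) by (rewrite mult_INR; reflexivity).
  assert (Hnpos : 0 < INR n) by (apply lt_0_INR; exact Hn).
  assert (Hσ : 0 < σ) by (unfold σ; rewrite H2n; apply Rdiv_lt_0_compat; lra).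
  assert (Hhalf : INR n * σ = L / 2) by (unfold σ; rewrite H2n; field; lra).
  set (pos k := if (k <? 2 * n)%nat then INR k * σ else 0).
  assert (Hpos : forall k, (k < 2 * n)%nat -> pos k = INR k * σ).
  { intros k Hk. unfold pos. now rewrite (proj2 (Nat.ltb_lt k (2 * n)) Hk). }
  assert (Hpos_end : pos (2 * n)%nat = 0) by (unfold pos; now rewrite Nat.ltb_irrefl).
  assert (Hin : forall k, (k <= 2 * n)%nat -> in_circle L (pos k)).
  { intros k Hk. unfold in_circle. destruct (Nat.eq_dec k (2 * n)) as [-> | Hne].
    - rewrite Hpos_end. lra.
    - rewrite Hpos by lia.
      assert (INR k + 1 <= 2 * INR n) by (rewrite <- S_INR, <- H2n; apply le_INR; lia).
      pose proof (pos_INR k). nra. }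
  exists (fun k => alpha (pos k)). split; [|split].
  - rewrite Hpos_end, (Hpos 0%nat) by lia. simpl INR. now rewrite Rmult_0_l.
  - intros k Hk. eapply Rle_trans; [apply Hcirc; apply Hin; lia|].
    apply Rplus_le_compat_r. unfold circ_dist. rewrite (Hpos k Hk).
    destruct (Nat.eq_dec (S k) (2 * n)) as [Hlast | Hinner].
    + rewrite Hlast, Hpos_end, Rminus_0_r. eapply Rle_trans; [apply Rmin_r|].
      assert (INR k + 1 = 2 * INR n) by (rewrite <- S_INR, Hlast, H2n; reflexivity).
      rewrite Rabs_right by (apply Rle_ge, Rmult_le_pos; [apply pos_INR | lra]). nra.
    + rewrite (Hpos (S k)) by lia. eapply Rle_trans; [apply Rmin_l|].
      rewrite S_INR. replace (INR k * σ - (INR k + 1) * σ) with (- σ) by ring.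
      rewrite Rabs_Ropp, Rabs_right; lra.
  - intros k Hk. apply Rge_le. destruct (Nat.eq_dec k n) as [-> | Hlt].
    + replace (n + n)%nat with (2 * n)%nat by lia.
      rewrite Hpos_end, Hpos, Hhalf, (is_metric_sym Hd) by lia.
      specialize (Hanti 0 ltac:(lra)). now rewrite Rplus_0_l in Hanti.
    + rewrite !Hpos, plus_INR by lia.
      replace ((INR k + INR n) * σ) with (INR k * σ + L / 2) by (rewrite <- Hhalf; ring).
      apply Hanti.
      assert (INR k + 1 <= INR n) by (rewrite <- S_INR; apply le_INR; lia).
      pose proof (pos_INR k). nra.
Qed.

Lemma qi_image_of_almost_isometric_circle {Y X : Type} (dY : Y -> Y -> R) (dX : X -> X -> R)
    (f : Y -> X) (Rx Ry LX C lam L : R) (alpha : R -> Y) (n : nat) :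
  is_metric dX -> 0 <= Rx -> rough_geodesic dX Rx -> is_metric dY -> 0 <= Ry ->
  0 < LX -> 0 < C -> 0 < lam -> quasi_isometry (fun y1 y2 => lam * dY y1 y2) dX f LX C ->
  is_R_circle dY Ry L alpha -> almost_isometric dY LX L alpha -> (0 < n)%nat ->
  let m := LX * (lam * (L / INR (2 * n) + Ry)) + C + 2 * Rx in
  let D := 1 / LX * (lam * (1 / LX * (L / 2))) - C in
  exists beta : R -> X, is_R_circle dX Rx (INR (2 * n) * m) beta /\
    forall u, 0 <= u < INR n * m -> D - m <= dX (beta u) (beta (u + INR n * m)).
Proof.
  intros HdX HRx HgX HdY HRy HLX HC Hlam [Hqi _] Hc Ha Hn m D.
  destruct (R_circle_samples dY Ry LX L alpha n HdY Hc Ha Hn) as (y & Hclosed & Hnear & Hfar).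
  set (x k := f (y k)).
  assert (HL : 0 < L) by apply Hc.
  assert (Hm : 0 < m).
  { assert (0 < L / INR (2 * n)) by (apply Rdiv_lt_0_compat, lt_0_INR; lia || lra).
    assert (0 < LX * (lam * (L / INR (2 * n) + Ry))) by (repeat apply Rmult_lt_0_compat; lra).
    unfold m. lra. }
  assert (Hstep : forall k, (k < 2 * n)%nat -> dX (x k) (x (S k)) + 2 * Rx <= m).
  { intros k Hk. destruct (Hqi (y k) (y (S k))) as [_ Hup]. specialize (Hnear k Hk).
    assert (LX * (lam * dY (y k) (y (S k))) <= LX * (lam * (L / INR (2 * n) + Ry)))
      by (repeat apply Rmult_le_compat_l; lra).
    unfold x, m. lra. }
  assert (Hantipodal : forall k, (k <= n)%nat -> D <= dX (x k) (x (k + n)%nat)).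
  { intros k Hk. destruct (Hqi (y k) (y (k + n)%nat)) as [Hlow _]. specialize (Hfar k Hk).
    assert (0 < 1 / LX) by (apply Rdiv_lt_0_compat; lra).
    assert (1 / LX * (lam * (1 / LX * (L / 2))) <= 1 / LX * (lam * dY (y k) (y (k + n)%nat)))
      by (repeat apply Rmult_le_compat_l; lra).
    unfold x, D. lra. }
  assert (Hsegs : exists seg : nat -> R -> X, forall k, (k < 2 * n)%nat ->
      rough_path dX Rx m (x k) (x (S k)) (seg k)).
  { apply (functional_choice (fun k p => (k < 2 * n)%nat -> rough_path dX Rx m (x k) (x (S k)) p)).
    intros k. destruct (Nat.lt_ge_cases k (2 * n)) as [Hk | Hk].
    - destruct (rough_path_of_rough_geodesic dX Rx m (x k) (x (S k)) HdX HgX (Hstep k Hk))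
        as [p Hp].
      now exists p.
    - exists (fun _ => x k). intros. lia. }
  destruct Hsegs as [seg Hseg].
  exists (polygon_loop m seg). split.
  - apply (polygon_loop_R_circle dX Rx m (2 * n) x); auto.
    + lia.
    + unfold x. now rewrite Hclosed.
  - apply (polygon_loop_antipodal dX Rx m (2 * n) x); auto.
Qed.

Lemma qi_preserves_strongly_shortcut {X : Type} (dX : X -> X -> R) (Rx KX BX LX : R) (n : nat) :
  is_metric dX -> 0 <= Rx -> rough_geodesic dX Rx -> 1 < KX ->
  (forall L alpha, is_R_circle dX Rx L alpha -> almost_isometric dX KX L alpha -> L <= BX) ->
  1 < LX -> (0 < n)%nat -> 0 < 1 / (2 * LX ^ 2) - LX / (2 * INR n) - LX / (2 * KX) ->
  forall (Y : Type) (dY : Y -> Y -> R) (Ry C : R) (f : Y -> X),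
    is_metric dY -> 0 <= Ry -> rough_geodesic dY Ry -> 0 < C ->
    qi_up_to_scaling dY dX f LX C -> strongly_shortcut dY Ry.
Proof.
  intros HdX HRx HgX HKX HBX HLX Hn Hθ Y dY Ry C f HdY HRy HgY HC [lam [Hlam Hqi]].
  split; [exact HgY|]. exists LX. split; [exact HLX|].
  set (θ := 1 / (2 * LX ^ 2) - LX / (2 * INR n) - LX / (2 * KX)) in *.
  set (E := C + (1 + INR n / KX) * (LX * (lam * Ry) + C + 2 * Rx)).
  exists (Rmax (BX / (LX * lam)) (E / (lam * θ))).
  intros L alpha Hc Ha. apply Rnot_lt_le. intros [HL_BX HL_E]%Rmax_Rlt.
  assert (Hnpos : 0 < INR n) by (apply lt_0_INR; exact Hn).
  apply (Rmult_lt_compat_l (LX * lam)) in HL_BX; [|nra].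
  apply (Rmult_lt_compat_l (lam * θ)) in HL_E; [|nra].
  replace (LX * lam * (BX / (LX * lam))) with BX in HL_BX by (field; lra).
  replace (lam * θ * (E / (lam * θ))) with E in HL_E by (field; lra).
  destruct (qi_image_of_almost_isometric_circle dY dX f Rx Ry LX C lam L alpha n
    HdX HRx HgX HdY HRy ltac:(lra) HC Hlam Hqi Hc Ha Hn) as (beta & Hcirc & Hanti).
  set (m := LX * (lam * (L / INR (2 * n) + Ry)) + C + 2 * Rx) in *.
  assert (H2n : INR (2 * n) = 2 * INR n) by (rewrite mult_INR; reflexivity).
  (* The antipodal margin of [beta] over the [KX] requirement is [lam θ L - E], positive since
     [L] is long: this is where [θ > 0] is used. *)
  assert (Halmost : almost_isometric dX KX (INR (2 * n) * m) beta).
  { intros s Hs. rewrite H2n in *. replace (2 * INR n * m / 2) with (INR n * m) in * by field.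
    apply Rle_ge. eapply Rle_trans; [|apply Hanti; exact Hs].
    assert (1 / LX * (lam * (1 / LX * (L / 2))) - C - m - 1 / KX * (INR n * m)
      = lam * θ * L - E) by (unfold θ, E, m; rewrite H2n; field; lra).
    lra. }
  pose proof (HBX _ _ Hcirc Halmost).
  assert (INR (2 * n) * m = LX * lam * L + 2 * INR n * (LX * (lam * Ry) + C + 2 * Rx))
    by (unfold m; rewrite H2n; field; lra).
  assert (0 <= LX * (lam * Ry)) by (apply Rmult_le_pos; nra).
  nra.
Qed.

Lemma qi_constant_exists (KX : R) : 1 < KX ->
  exists (LX : R) (n : nat), 1 < LX /\ (0 < n)%nat /\
    0 < 1 / (2 * LX ^ 2) - LX / (2 * INR n) - LX / (2 * KX).
Proof.
  intros HKX.
  set (δ := Rmin 1 ((KX - 1) / 8)).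
  assert (Hδ : 0 < δ <= 1 /\ δ <= (KX - 1) / 8) by (unfold δ, Rmin; destruct Rle_dec; lra).
  set (LX := 1 + δ).
  assert (HLX : 1 < LX) by (unfold LX; lra).
  assert (Hcube : LX ^ 3 < KX).
  { unfold LX. simpl. assert ((1 + δ) * ((1 + δ) * ((1 + δ) * 1)) <= 1 + 7 * δ) by nra. lra. }
  set (θ := 1 / (2 * LX ^ 2) - LX / (2 * KX)).
  assert (Hθ : 0 < θ).
  { unfold θ. replace (1 / (2 * LX ^ 2) - LX / (2 * KX)) with ((KX - LX ^ 3) / (2 * LX ^ 2 * KX))
      by (field; lra).
    apply Rdiv_lt_0_compat; [lra|]. simpl. nra. }
  destruct (INR_unbounded (2 * LX / θ)) as [n Hn].
  exists LX, n.
  assert (Hnpos : 0 < INR n) by (assert (0 < 2 * LX / θ) by (apply Rdiv_lt_0_compat; lra); lra).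
  split; [exact HLX|]. split; [apply INR_lt; simpl; lra|].
  assert (LX / (2 * INR n) < θ).
  { apply (Rmult_lt_reg_r (2 * INR n)); [lra|].
    replace (LX / (2 * INR n) * (2 * INR n)) with LX by (field; lra).
    apply (Rmult_lt_compat_l θ) in Hn; [|exact Hθ].
    replace (θ * (2 * LX / θ)) with (2 * LX) in Hn by (field; lra). lra. }
  unfold θ in *. lra.
Qed.

Lemma qi_up_to_scaling_weaken {Y X : Type} (dY : Y -> Y -> R) (dX : X -> X -> R)
    (f : Y -> X) (K K' C : R) :
  is_metric dY -> 1 <= K <= K' ->
  qi_up_to_scaling dY dX f K C -> qi_up_to_scaling dY dX f K' C.
Proof.
  intros HdY HK [lam [Hlam [Hqi Hdense]]].
  exists lam. split; [exact Hlam|]. split; [|exact Hdense].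
  intros y1 y2. destruct (Hqi y1 y2) as [Hlow Hup].
  assert (0 <= lam * dY y1 y2) by (apply Rmult_le_pos; [lra | apply HdY]).
  assert (1 / K' <= 1 / K) by (apply Rmult_le_compat_l, Rinv_le_contravar; lra).
  split; nra.
Qed.

Theorem corollary3p13 :
  forall (X : Type) (dX : X -> X -> R) (Rx : R),
    is_metric dX -> 0 <= Rx -> strongly_shortcut dX Rx ->
    (exists LX : R, 1 < LX /\
       forall (Y : Type) (dY : Y -> Y -> R) (Ry C : R) (f : Y -> X),
         is_metric dY -> 0 <= Ry -> rough_geodesic dY Ry -> 0 < C ->
         qi_up_to_scaling dY dX f LX C -> strongly_shortcut dY Ry) /\
    (forall (Y : Type) (dY : Y -> Y -> R) (Ry : R) (f : Y -> X),
       is_metric dY -> 0 <= Ry -> rough_geodesic dY Ry ->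
       rough_similarity dY dX f -> strongly_shortcut dY Ry).
Proof.
  intros X dX Rx HdX HRx [HgX [KX [HKX [BX HBX]]]].
  destruct (qi_constant_exists KX HKX) as (LX & n & HLX & Hn & Hθ).
  pose proof (qi_preserves_strongly_shortcut dX Rx KX BX LX n
    HdX HRx HgX HKX HBX HLX Hn Hθ) as Htransfer.
  split.
  - exists LX. split; [exact HLX | exact Htransfer].
  - intros Y dY Ry f HdY HRy HgY [C [HC Hsim]].
    apply (Htransfer Y dY Ry C f HdY HRy HgY HC).
    apply (qi_up_to_scaling_weaken dY dX f 1 LX C HdY ltac:(lra) Hsim).
Qed.
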